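(* Let $\mathbf p$ be a reproduction law with $p_0=0$, $p_1<1$, let $\Gamma$ take values in $(1,\infty)$, and let $T$ be a $(\Gamma,\mathbf p)$-Galton–Watson tree with recursive lengths. Let $\phi$ and $\kappa$ be as defined below. Assume that $\mathbb E[\kappa(\phi(T))]$ and $\sum_{k\ge1}p_kk$ are finite. Then $\mathbb E[-\log(1-\Gamma_\varnothing^{-1})\,\kappa(\phi(T))]$ is finite if and only if $\mathbb E[-\log(1-\Gamma_\varnothing^{-1})]$ is finite.
   Context: Trees are leafless rooted planar trees encoded by finite words, root $\varnothing$, with an artificial parent $\varnothing_*$ of the root; a $(\Gamma,\mathbf p)$-Galton–Watson tree carries i.i.d. marks $\Gamma_x$. The random walk on $T\cup\{\varnothing_*\}$ goes from $\varnothing_*$ to $\varnothing$ with probability 1, and from $x$ to child $xi$ with probability $\Gamma_{xi}/(\Gamma_x-1+\sum_j\Gamma_{xj})$ and to its parent with probability $(\Gamma_x-1)/(\Gamma_x-1+\sum_j\Gamma_{xj})$. $\beta(T)$ is the probability that this walk started at $\varnothing$ never hits $\varnothing_*$, $\phi(T)=\Gamma_\varnothing\beta(T)$, and for $u>1$, $\kappa(u)=\mathbb E[uS/(u-1+S)]$ with $S=\sum_{j=1}^{\nu_{\tilde T}(\varnothing)}\phi(\tilde T[j])$, $\tilde T$ an independent copy of $T$. *)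

From HB Require Import structures.
From mathcomp Require Import all_boot all_order all_algebra.
From mathcomp Require Import all_classical all_reals all_analysis.
Set Implicit Arguments. Unset Strict Implicit. Unset Printing Implicit Defensive.
Import Order.TTheory GRing.Theory Num.Theory.
Import numFieldNormedType.Exports.
Local Open Scope classical_set_scope.
Local Open Scope ring_scope.

(* Ulam–Harris words, written root-first: the child number i of x is rcons x i
   (children of x are numbered 0, ..., nu x - 1).
   A marked tree is given by nu : word -> nat (number of children) and
   G : word -> R (marks Gamma_x); the tree T is the set of words reachable
   from [::] with letters below the number of children. *)
Definition word := seq nat.

Section Walk.
Variable R : realType.

(* parent in T ∪ {root_*}; None is the artificial parent root_* *)
Definition parent (x : word) : option word :=
  if x is [::] then None else Some (take (size x).-1 x).

(* hitp nu G n v = probability that the random walk on T ∪ {root_*}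
   started at v has visited root_* within the first n steps. *)
Fixpoint hitp (nu : word -> nat) (G : word -> R) (n : nat) (v : option word)
  : R :=
  match n with
  | 0 => if v is None then 1 else 0
  | n'.+1 =>
    match v with
    | None => 1
    | Some x =>
      let D := G x - 1 + \sum_(i < nu x) G (rcons x i) in
      (G x - 1) / D * hitp nu G n' (parent x)
      + \sum_(i < nu x) (G (rcons x i) / D * hitp nu G n' (Some (rcons x i)))
    end
  end.

Definition beta (nu : word -> nat) (G : word -> R) : R :=
  1 - limn (fun n => hitp nu G n (Some [::])).

Definition phi (nu : word -> nat) (G : word -> R) : R := G [::] * beta nu G.

(* subtree T[j] rooted at the child j of the root *)
Definition shift {A} (f : word -> A) (j : nat) : word -> A :=
  fun y => f (j :: y).

Definition Ssum (nu : word -> nat) (G : word -> R) : R :=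
  \sum_(j < nu [::]) phi (shift nu j) (shift G j).

End Walk.

(* kappa(u) = E[u S / (u - 1 + S)], S computed on a tree with the same law as
   T (the independent copy only serves to make kappa a deterministic function). *)
Definition kappa (R : realType) d (Omega : measurableType d)
  (P : probability Omega R) (nu : word -> Omega -> nat) (G : word -> Omega -> R)
  (u : R) : \bar R :=
  (\int[P]_w ((u * Ssum (fun x => nu x w) (fun x => G x w)
               / (u - 1 + Ssum (fun x => nu x w) (fun x => G x w)))%:E))%E.

(* (nu_x, Gamma_x)_{x word} are i.i.d., nu_x ~ p, Gamma_x ~ mu, nu_x independent
   of Gamma_x: the product rule over every finite family of distinct words. *)
Definition iid_marked_GW (R : realType) d (Omega : measurableType d)
  (P : probability Omega R) (p : nat -> R) (mu : probability R R)
  (nu : word -> Omega -> nat) (G : word -> Omega -> R) : Prop :=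
  forall (n : nat) (x : 'I_n -> word) (k : 'I_n -> nat) (A : 'I_n -> set R),
    injective x -> (forall i, measurable (A i)) ->
    P (\bigcap_(i in [set: 'I_n]) [set w | nu (x i) w = k i /\ G (x i) w \in A i])
    = (\prod_(i < n) (p (k i) * fine (mu (A i))))%:E.

(* Almost surely every vertex of T has a child, since p_0 = 0 and there are
   countably many words. On that event the product of the factors
   1 - Gamma_y^-1 over the ancestors y of x is superharmonic for the walk, so
   the walk from the root reaches root_* with probability at most
   1 - Gamma_root^-1: hence 1 <= phi(T) <= Gamma_root, likewise S >= 1, and so
   1/2 <= kappa(u) <= u for u >= 1. Writing L = -log(1 - Gamma_root^-1), this
   gives L/2 <= L kappa(phi(T)), while L kappa(phi(T)) <= 2 L where
   Gamma_root <= 2 and L kappa(phi(T)) <= kappa(phi(T)) where Gamma_root > 2,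
   because L <= 1 there. Integrating these almost sure bounds proves both
   implications. *)

From Pilot Require Import Defs.
From HB Require Import structures.
From mathcomp Require Import all_boot all_order all_algebra.
From mathcomp Require Import all_classical all_reals all_analysis.
From mathcomp Require Import measurable_realfun ring lra.
Import Order.TTheory GRing.Theory Num.Theory.
Import numFieldNormedType.Exports.
Local Open Scope classical_set_scope.
Local Open Scope ring_scope.

Section ln_1Bv.
Variable R : realType.
Implicit Type g : R.

Lemma ln_1Bv g : 1 < g -> ln (1 - g^-1) = ln (g - 1) - ln g.
Proof.
move=> g1; have g0 : 0 < g by lra.
have -> : 1 - g^-1 = (g - 1) / g by rewrite mulrBl divff ?mul1r // gt_eqF.
by rewrite lnM ?posrE ?invr_gt0 ?subr_gt0 // lnV ?posrE.
Qed.

Lemma ln_1Bv_le0 g : 1 < g -> ln (1 - g^-1) <= 0.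
Proof. by move=> g1; apply: ln_le0; rewrite lerBlDr lerDl invr_ge0; lra. Qed.

Lemma ln_1Bv_ge_N1 g : 2 <= g -> -1 <= ln (1 - g^-1).
Proof.
move=> g2; have g0 : 0 < g by lra.
have gV : g^-1 <= 2^-1 by rewrite lef_pV2 ?posrE //; lra.
have eN1 : expR (-1) <= 2^-1 :> R.
  rewrite expRN lef_pV2 ?posrE ?expR_gt0 //.
  by have := expR_ge1Dx (1 : R); lra.
by rewrite -[leLHS](expRK (-1)) ler_ln ?posrE ?expR_gt0 //; lra.
Qed.

End ln_1Bv.

Lemma measurable_oppr_ln_1Bv d (T : measurableType d) (R : realType)
    (f : T -> R) : (forall x, 1 < f x) -> measurable_fun setT f ->
  measurable_fun setT (fun x => (- ln (1 - (f x)^-1))%:E).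
Proof.
move=> f_gt1 mf; apply/measurable_EFinP; apply: measurable_funN.
(* The library has no measurability lemma for inversion. *)
apply: (eq_measurable_fun (fun x => ln (f x - 1) - ln (f x))).
  by move=> x _; rewrite ln_1Bv.
apply: measurable_funB; apply: measurableT_comp (@measurable_ln R) _ => //.
exact: measurable_funB.
Qed.

(* kappa(phi(T)) is not known to be measurable. For such an f,
   [\int[mu]_x f x] is the inner integral: the supremum of the integrals of
   the simple functions below f^\+, minus the same for f^\-. *)
Section integral_nonmeasurable.
Local Open Scope ereal_scope.
Context {d : measure_display} {T : measurableType d} {R : realType}
  (mu : {measure set T -> \bar R}).
Implicit Types (f g : T -> \bar R) (A : set T).
Import HBNNSimple.

Lemma ge0_le_integral_nonmeas {f g} : (forall x, 0 <= f x) ->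
  (forall x, f x <= g x) -> \int[mu]_x f x <= \int[mu]_x g x.
Proof.
move=> f0 fg; have g0 x : 0 <= g x by exact: le_trans (f0 x) (fg x).
rewrite !ge0_integralTE //; apply: ereal_sup_le => _ [h hf <-].
by exists h => // x; exact: le_trans (hf x) (fg x).
Qed.

Lemma ae_ge0_le_integral_nonmeas {f g} : (forall x, 0 <= f x) ->
  (forall x, 0 <= g x) -> {ae mu, forall x, f x <= g x} ->
  \int[mu]_x f x <= \int[mu]_x g x.
Proof.
move=> f0 g0 [N [mN N0 fgN]]; rewrite [leLHS]ge0_integralTE //.
(* A simple function below f, cut off on the null set N, lies below g. *)
apply: ge_ereal_sup => _ [h hf <-].
have h0 x : 0 <= (h x)%:E by rewrite lee_fin.
rewrite -integralT_nnsfun (ge0_negligible_integral _ _ _ _ N0) //; last first.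
  exact/measurable_EFinP.
rewrite (integral_mkcond (setT `\` N)).
apply: ge0_le_integral_nonmeas => x; rewrite patchE; first by case: ifP.
case: ifPn => [/set_mem [_ Nx]|_ //].
by apply: le_trans (hf x) _; apply: contrapT => /= fg; apply: Nx; exact: fgN.
Qed.

Lemma ae_ge0_integral_funepos {f} : {ae mu, forall x, 0 <= f x} ->
  \int[mu]_x f x = \int[mu]_x f^\+ x.
Proof.
move=> f0; rewrite integralE; suff -> : \int[mu]_x f^\- x = 0 by rewrite sube0.
apply/eqP; rewrite eq_le integral_ge0 // andbT -(integral0 mu setT).
apply: ae_ge0_le_integral_nonmeas => //; apply: filterS f0 => x f0.
by rewrite funenegE ge_max lexx andbT leeNl oppe0.
Qed.

Lemma ae_le_integral_nonmeas {f g} : {ae mu, forall x, 0 <= f x} ->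
  {ae mu, forall x, f x <= g x} -> \int[mu]_x f x <= \int[mu]_x g x.
Proof.
move=> f0 fg; have g0 : {ae mu, forall x, 0 <= g x}.
  by apply: filterS2 f0 fg => x; exact: le_trans.
rewrite (ae_ge0_integral_funepos f0) (ae_ge0_integral_funepos g0).
apply: ae_ge0_le_integral_nonmeas => [x|x|]; rewrite ?funepos_ge0 //.
by apply: filterS fg => x fg; rewrite !funeposE; exact: le_max2.
Qed.

Lemma ae_ge0_integral_le_setC {f A} : measurable A ->
  {ae mu, forall x, 0 <= f x} ->
  \int[mu]_x f x <= \int[mu]_(x in A) f x + \int[mu]_(x in ~` A) f x.
Proof.
move=> mA f0; have f0_in B : {ae mu, forall x, 0 <= (f \_ B) x}.
  by apply: filterS f0 => x f0; rewrite patchE; case: ifP.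
rewrite (integral_mkcond A) (integral_mkcond (~` A)).
rewrite (ae_ge0_integral_funepos f0).
rewrite !(ae_ge0_integral_funepos (f0_in _)) !funepos_restrict.
rewrite [leLHS]ge0_integralTE ?funepos_ge0 //.
apply: ge_ereal_sup => _ [h hf <-].
have mh : measurable_fun setT (EFin \o h) by exact/measurable_EFinP.
rewrite -integralT_nnsfun.
have -> : \int[mu]_x (h x)%:E =
    \int[mu]_(x in A) (h x)%:E + \int[mu]_(x in ~` A) (h x)%:E.
  rewrite -integral_setU ?setUCr //; first exact: measurableC.
  exact/disj_set2P/setICr.
rewrite (integral_mkcond A) (integral_mkcond (~` A)).
by apply: leeD; apply: ge0_le_integral_nonmeas => x; rewrite !patchE;
  case: ifP => //; rewrite lee_fin.
Qed.

End integral_nonmeasurable.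

Section weighted_integrals.
Local Open Scope ereal_scope.
Context {d : measure_display} {T : measurableType d} {R : realType}
  (mu : {measure set T -> \bar R}).
Context {f g : T -> \bar R}.
Hypotheses (mf : measurable_fun setT f) (f0 : forall x, 0 <= f x).

Lemma integral_lt_pinfty_of_mul {c : R} : (0 < c)%R ->
  {ae mu, forall x, c%:E <= g x} ->
  \int[mu]_x (f x * g x) < +oo -> \int[mu]_x f x < +oo.
Proof.
move=> c0 cg fg_fin.
have cf_le : c%:E * \int[mu]_x f x <= \int[mu]_x (f x * g x).
  rewrite -ge0_integralZl_EFin ?(ltW c0) //.
  apply: ae_le_integral_nonmeas.
    by apply: aeW => x; rewrite mule_ge0 ?lee_fin ?(ltW c0).
  apply: filterS cg => x cgx; rewrite muleC.
  by apply: lee_pmul; rewrite ?lee_fin ?(ltW c0).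
rewrite -[ltLHS]mul1e -(mulVf (lt0r_neq0 c0)) EFinM -muleA.
apply: lte_mul_pinfty; rewrite ?lee_fin ?invr_ge0 ?(ltW c0) //.
exact: le_lt_trans cf_le fg_fin.
Qed.

Lemma integral_mul_le_split {A : set T} {c : R} : measurable A -> (0 <= c)%R ->
  {ae mu, forall x, 0 <= g x} ->
  {ae mu, forall x, A x -> f x <= 1} ->
  {ae mu, forall x, ~ A x -> g x <= c%:E} ->
  \int[mu]_x (f x * g x) <= \int[mu]_x g x + c%:E * \int[mu]_x f x.
Proof.
move=> mA c0 g0 f1 gc.
have fg0 : {ae mu, forall x, 0 <= f x * g x}.
  by apply: filterS g0 => x g0x; rewrite mule_ge0.
apply: le_trans (ae_ge0_integral_le_setC mu mA fg0) _.
rewrite (integral_mkcond A) (integral_mkcond (~` A)) -ge0_integralZl_EFin //.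
apply: leeD.
- apply: ae_le_integral_nonmeas.
    by apply: filterS fg0 => x fg0x; rewrite patchE; case: ifP.
  apply: filterS2 g0 f1 => x g0x f1x; rewrite patchE.
  case: ifPn => [/set_mem Ax|_ //]; rewrite -[leRHS]mul1e.
  by apply: lee_pmul => //; exact: f1x.
- apply: ae_le_integral_nonmeas.
    by apply: filterS fg0 => x fg0x; rewrite patchE; case: ifP.
  apply: filterS2 g0 gc => x g0x gcx; rewrite patchE.
  case: ifPn => [/set_mem nAx|_]; last by rewrite mule_ge0 ?lee_fin.
  by rewrite muleC; apply: lee_pmul; rewrite ?lee_fin //; exact: gcx.
Qed.

End weighted_integrals.

Lemma ae_forall_countable d (T : measurableType d) (R : realType)
    (mu : {measure set T -> \bar R}) (I : countType) (P : I -> T -> Prop) :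
  (forall i, \forall x \ae mu, P i x) -> \forall x \ae mu, forall i, P i x.
Proof.
move=> aeP.
have /ae_foralln : forall n, \forall x \ae mu,
    if @unpickle I n is Some i then P i x else True.
  by move=> n; case: unpickle => [i|]; [exact: aeP | exact: aeW].
by apply: filterS => x Px i; have := Px (pickle i); rewrite pickleK.
Qed.

Section walk.
Variables (R : realType) (nu : word -> nat) (G : word -> R).
Hypothesis G_gt1 : forall x, 1 < G x.

Let G_gt0 x : 0 < G x. Proof. exact: lt_trans ltr01 (G_gt1 x). Qed.

Let conductance x := G x - 1 + \sum_(i < nu x) G (rcons x i).

Let conductance_gt0 x : 0 < conductance x.
Proof.
rewrite /conductance ltr_wpDr ?subr_gt0 //.
by apply: sumr_ge0 => i _; exact: ltW.
Qed.

Let parent_weight_ge0 x : 0 <= (G x - 1) / conductance x.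
Proof. by rewrite divr_ge0 ?subr_ge0 ?ltW. Qed.

Let child_weight_ge0 x i : 0 <= G (rcons x i) / conductance x.
Proof. by rewrite divr_ge0 ?ltW. Qed.

Let weights_sum1 x :
  (G x - 1) / conductance x + \sum_(i < nu x) G (rcons x i) / conductance x = 1.
Proof. by rewrite -mulr_suml -mulrDl divff // gt_eqF ?conductance_gt0. Qed.

Lemma hitp_ge0_le1 n v : 0 <= hitp nu G n v <= 1.
Proof.
elim: n v => [|n IH] [x|] //=; rewrite ?lexx ?ler01 //.
have h0 v : 0 <= hitp nu G n v by case/andP: (IH v).
have h1 v : hitp nu G n v <= 1 by case/andP: (IH v).
apply/andP; split.
  apply: addr_ge0; first exact: mulr_ge0 (parent_weight_ge0 x) (h0 _).
  by apply: sumr_ge0 => i _; exact: mulr_ge0 (child_weight_ge0 x i) (h0 _).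
rewrite -[leRHS](weights_sum1 x) lerD ?ler_sum // => [|i _];
  by rewrite ler_piMr ?h1.
Qed.

Lemma hitp_nondecreasing v : nondecreasing_seq (fun n => hitp nu G n v).
Proof.
apply/nondecreasing_seqP => n; elim: n v => [|n IH] [x|] //=.
  by case/andP: (hitp_ge0_le1 1 (Some x)).
by rewrite lerD ?ler_sum // => [|i _]; exact: ler_wpM2l.
Qed.

Lemma hitp_cvg v : cvgn (fun n => hitp nu G n v).
Proof.
apply: nondecreasing_is_cvgn; first exact: hitp_nondecreasing.
by exists 1 => _ [n _ <-]; case/andP: (hitp_ge0_le1 n v).
Qed.

Lemma limn_hitp_ge0 v : 0 <= limn (fun n => hitp nu G n v).
Proof.
apply: le_trans (nondecreasing_cvgn_le (hitp_nondecreasing v) (hitp_cvg v) 0).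
by case/andP: (hitp_ge0_le1 0 v).
Qed.

Definition potential (v : option word) : R :=
  if v is Some x then \prod_(k < (size x).+1) (1 - (G (take k x))^-1) else 1.

Lemma potential_ge0 v : 0 <= potential v.
Proof.
case: v => [x|] //=; apply: prodr_ge0 => k _.
by rewrite subr_ge0 invf_le1 ?ltW.
Qed.

Lemma potential_rcons x i :
  potential (Some (rcons x i)) = potential (Some x) * (1 - (G (rcons x i))^-1).
Proof.
rewrite /= size_rcons big_ord_recr /=; congr (_ * _).
  apply: eq_bigr => k _; congr (1 - (G _)^-1).
  by rewrite -cats1 takel_cat // -ltnS.
by rewrite -(size_rcons x i) take_size.
Qed.

Lemma potential_parent x :
  potential (parent x) * (1 - (G x)^-1) = potential (Some x).
Proof.
case/lastP: x => [|y a]; first by rewrite /= big_ord1 mul1r.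
have -> : parent (rcons y a) = Some y.
  rewrite /parent; case E: (rcons y a) => [|b s]; first by case: y E.
  by rewrite -E size_rcons -cats1 take_size_cat.
by rewrite potential_rcons.
Qed.

Hypothesis nu_gt0 : forall x, (0 < nu x)%N.

(* One step of the walk from x decreases the potential on average by the
   factor (G x + S - nu x) / (G x - 1 + S), with S the sum of the children's
   marks: this is at most 1 exactly because x has a child. *)
Lemma potential_superharmonic x :
  (G x - 1) / conductance x * potential (parent x)
  + \sum_(i < nu x) G (rcons x i) / conductance x * potential (Some (rcons x i))
  <= potential (Some x).
Proof.
have Gx1 : G x - 1 != 0 by rewrite subr_eq0 gt_eqF.
have parentE : potential (parent x) = potential (Some x) * G x / (G x - 1).
  by rewrite -potential_parent; field; rewrite Gx1 gt_eqF.
have childE i : G (rcons x i) / conductance x * potential (Some (rcons x i))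
    = potential (Some x) / conductance x * (G (rcons x i) - 1).
  by rewrite potential_rcons; field; rewrite !gt_eqF.
under eq_bigr => i _ do rewrite childE.
rewrite parentE -mulr_sumr sumrB sumr_const.
rewrite card_ord; set S := \sum_(i < nu x) _.
have -> : (G x - 1) / conductance x * (potential (Some x) * G x / (G x - 1))
    + potential (Some x) / conductance x * (S - 1 *+ nu x)
    = potential (Some x) * ((G x + S - (nu x)%:R) / conductance x).
  by field; rewrite Gx1 gt_eqF.
rewrite ler_piMr ?potential_ge0 // ler_pdivrMr // mul1r /conductance -/S.
have : 1 <= (nu x)%:R :> R by rewrite (ler_nat R 1) nu_gt0.
lra.
Qed.

Lemma hitp_le_potential n v : hitp nu G n v <= potential v.
Proof.
elim: n v => [|n IH] [x|] //=; first exact: (potential_ge0 (Some x)).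
apply: le_trans (potential_superharmonic x).
by rewrite lerD ?ler_sum // => [|i _]; exact: ler_wpM2l.
Qed.

Lemma phi_ge1 : 1 <= phi nu G.
Proof.
have hit_le : limn (fun n => hitp nu G n (Some [::])) <= 1 - (G [::])^-1.
  apply: limr_le; first exact: hitp_cvg.
  apply: nearW => n; apply: le_trans (hitp_le_potential n (Some [::])) _.
  by rewrite /= big_ord1.
rewrite /phi /beta -[leLHS](divff (lt0r_neq0 (G_gt0 [::]))).
by apply: ler_wpM2l; [exact: ltW | lra].
Qed.

Lemma phi_le_root : phi nu G <= G [::].
Proof.
rewrite /phi /beta ler_piMr ?(ltW (G_gt0 _)) // lerBlDr lerDl.
exact: limn_hitp_ge0.
Qed.

End walk.

Lemma Ssum_ge1 (R : realType) (nu : word -> nat) (G : word -> R) :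
  (forall x, 1 < G x) -> (forall x, (0 < nu x)%N) -> 1 <= Ssum nu G.
Proof.
move=> G_gt1 nu_gt0; rewrite /Ssum.
have phi_child_ge1 j : 1 <= phi (Defs.shift nu j) (Defs.shift G j).
  by apply: phi_ge1 => y; [exact: G_gt1 | exact: nu_gt0].
case: (nu [::]) (nu_gt0 [::]) => [//|m] _.
rewrite big_ord_recl -[leLHS]addr0 lerD //.
by apply: sumr_ge0 => i _; exact: le_trans ler01 (phi_child_ge1 _).
Qed.

Lemma kappa_integrand_bounds (R : realFieldType) (u S : R) : 1 <= u -> 1 <= S ->
  2^-1 <= u * S / (u - 1 + S) <= u.
Proof.
move=> u1 S1; have D0 : 0 < u - 1 + S by lra.
by rewrite ler_pdivlMr // ler_pdivrMr //; apply/andP; split; nra.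
Qed.

Lemma kappa_bounds {R : realType} {d} {Omega : measurableType d}
    (P : probability Omega R)
    {nu : word -> Omega -> nat} {G : word -> Omega -> R}
    {u : R} :
  (forall x w, 1 < G x w) -> (\forall w \ae P, forall x, (0 < nu x w)%N) ->
  1 <= u -> ((2^-1)%:E <= kappa P nu G u <= u%:E)%E.
Proof.
move=> G_gt1 nu_gt0 u1.
have integrand_bounds : \forall w \ae P,
    ((2^-1)%:E <= (u * Ssum (nu^~ w) (G^~ w)
                  / (u - 1 + Ssum (nu^~ w) (G^~ w)))%:E <= u%:E)%E.
  apply: filterS (nu_gt0) => w nu_gt0w; rewrite !lee_fin.
  by apply: kappa_integrand_bounds => //; apply: Ssum_ge1 => // x; exact: G_gt1.
have integral_cstE (c : R) : (\int[P]_w c%:E = c%:E)%E.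
  by rewrite integral_cst // [X in (_ * X)%E]probability_setT mule1.
apply/andP; split.
  rewrite -[leLHS]integral_cstE; apply: ae_le_integral_nonmeas.
    by apply: aeW => w; rewrite lee_fin invr_ge0 ler0n.
  by apply: filterS integrand_bounds => w /andP[].
rewrite -[leRHS]integral_cstE; apply: ae_le_integral_nonmeas.
  apply: filterS integrand_bounds => w /andP[lo _].
  by apply: le_trans lo; rewrite lee_fin invr_ge0 ler0n.
by apply: filterS integrand_bounds => w /andP[].
Qed.

Lemma kappa_phi_bounds {R : realType} {d} {Omega : measurableType d}
    (P : probability Omega R)
    {nu : word -> Omega -> nat} {G : word -> Omega -> R} :
  (forall x w, 1 < G x w) -> (\forall w \ae P, forall x, (0 < nu x w)%N) ->
  \forall w \ae P, ((2^-1)%:E <= kappa P nu G (phi (nu^~ w) (G^~ w))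
                     <= (G [::] w)%:E)%E.
Proof.
move=> G_gt1 nu_gt0; apply: filterS (nu_gt0) => w nu_gt0w.
have phi_ge1w : 1 <= phi (nu^~ w) (G^~ w) by apply: phi_ge1 => // x.
have /andP[-> KG] := kappa_bounds P G_gt1 nu_gt0 phi_ge1w.
by apply: le_trans KG _; rewrite lee_fin; apply: phi_le_root => x.
Qed.

Lemma iid_marked_GW_nu_gt0 {R : realType} {d} {Omega : measurableType d}
    {P : probability Omega R} {p : nat -> R} {mu : probability R R}
    {nu : word -> Omega -> nat} {G : word -> Omega -> R} :
  (forall x k, measurable [set w | nu x w = k]) -> p 0%N = 0 ->
  iid_marked_GW P p mu nu G -> \forall w \ae P, forall x, (0 < nu x w)%N.
Proof.
move=> mnu p0 iid; apply: ae_forall_countable => x.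
exists [set w | nu x w = 0%N]; split => //; last first.
  by move=> w /=; rewrite lt0n => /negP; rewrite negbK => /eqP.
have -> : [set w | nu x w = 0%N] = \bigcap_(i in [set: 'I_1])
    [set w | nu x w = 0%N /\ G x w \in [set: R]].
  apply/seteqP; split=> w /=.
    by move=> nu0 i _; split=> //; exact: in_setT.
  by move=> /(_ ord0 I) [].
have := iid 1%N (fun=> x) (fun=> 0%N) (fun=> setT).
rewrite big_ord1 p0 mul0r; apply => // i j _.
by rewrite !ord1.
Qed.

Theorem mainTheorem7 (R : realType) (d : measure_display) (Omega : measurableType d)
  (P : probability Omega R) (p : nat -> R) (mu : probability R R)
  (nu : word -> Omega -> nat) (G : word -> Omega -> R) :
  (* reproduction law p with p_0 = 0, p_1 < 1 *)
  (forall k, 0 <= p k) ->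
  (\sum_(k <oo) (p k)%:E = 1)%E ->
  p 0%N = 0 -> p 1%N < 1 ->
  (* Gamma takes values in (1, oo) *)
  (forall x w, 1 < G x w) ->
  (* measurability of the labels *)
  (forall x k, measurable [set w | nu x w = k]) ->
  (forall x, measurable_fun setT (G x)) ->
  (* (Gamma, p)-Galton-Watson tree *)
  iid_marked_GW P p mu nu G ->
  (* E[kappa(phi(T))] < oo and sum_k p_k k < oo *)
  (\int[P]_w kappa P nu G (phi (fun x => nu x w) (fun x => G x w)) < +oo)%E ->
  (\sum_(k <oo) (k%:R * p k)%:E < +oo)%E ->
  ((\int[P]_w ((- ln (1 - (G [::] w)^-1))%:E
                * kappa P nu G (phi (fun x => nu x w) (fun x => G x w))) < +oo)%E
   <-> (\int[P]_w (- ln (1 - (G [::] w)^-1))%:E < +oo)%E).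
Proof.
(* Of the reproduction law only p_0 = 0 matters: the bounds
   1/2 <= kappa(phi(T)) <= Gamma_root hold regardless of its moments. *)
move=> _ _ p0 _ G_gt1 mnu mG iid intK _.
have nu_gt0 := iid_marked_GW_nu_gt0 mnu p0 iid.
have K_bounds := kappa_phi_bounds P G_gt1 nu_gt0.
set L := fun w => (- ln (1 - (G [::] w)^-1))%:E.
have L_ge0 w : (0 <= L w)%E by rewrite lee_fin oppr_ge0 ln_1Bv_le0.
have mL : measurable_fun setT L by apply: measurable_oppr_ln_1Bv.
split => [intLK | intL].
  have half_gt0 : 0 < 2^-1 :> R by rewrite invr_gt0.
  apply: (integral_lt_pinfty_of_mul P mL L_ge0 half_gt0 _ intLK).
  by apply: filterS K_bounds => w /andP[].
have A_measurable : measurable (G [::] @^-1` `]2, +oo[).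
  by rewrite -[X in measurable X]setTI; exact: mG.
apply: le_lt_trans
  (integral_mul_le_split P mL L_ge0 A_measurable (ler0n R 2) _ _ _) _.
- apply: filterS K_bounds => w /andP[lo _].
  by apply: le_trans lo; rewrite lee_fin.
- apply: aeW => w /=; rewrite in_itv /= andbT => /ltW G2.
  by rewrite lee_fin lerNl ln_1Bv_ge_N1.
- apply: filterS K_bounds => w /andP[_ KG] /=; rewrite in_itv /= andbT.
  move=> /negP; rewrite -leNgt => G2.
  by apply: le_trans KG _; rewrite lee_fin.
- by rewrite lte_add_pinfty // lte_mul_pinfty.
Qed.
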